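(* Let $n_1,n_2\ge 1$ be integers, $n=n_1+n_2$, and consider a uniformly random arrangement of $n_1$ symbols $x$ and $n_2$ symbols $y$ (all $\binom{n}{n_1}$ arrangements equally likely). Let $R_1$ and $R_2$ be the numbers of runs of $x$'s and of $y$'s, respectively, and $R_M=\max(R_1,R_2)$. Then $$E(R_M)=2+\frac{n(n_1-1)(n_2-1)-2n_1n_2}{n(n-1)},$$ $$\mathrm{Var}(R_M)=\frac{n_1n_2\left[n_1^3+n_2^3+n_1^3n_2+n_1n_2^3-n_1^2-n_2^2+2n_1^2n_2^2-5n_1^2n_2-5n_1n_2^2+6n_1n_2\right]}{n^2(n-1)^2(n-2)}.$$
   Context: A run is a maximal block of consecutive identical symbols in the arrangement. *)

From HB Require Import structures.
From mathcomp Require Import all_boot all_order all_algebra.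
Set Implicit Arguments. Unset Strict Implicit. Unset Printing Implicit Defensive.
Import Order.TTheory GRing.Theory Num.Theory.

(* Symbol x is encoded as [true], symbol y as [false]. *)

(* A run of b's is counted at its first position. *)
Fixpoint runs_from (b : bool) (prev : option bool) (s : seq bool) : nat :=
  match s with
  | [::] => 0
  | c :: s' => ((c == b) && (prev != Some b)) + runs_from b (Some c) s'
  end.

Definition runs (b : bool) (s : seq bool) : nat := runs_from b None s.

Definition RM (s : seq bool) : nat := maxn (runs true s) (runs false s).

Definition arrangements (n1 n2 : nat) : {set (n1 + n2).-tuple bool} :=
  [set t : (n1 + n2).-tuple bool | count id t == n1].

Definition E_unif (n1 n2 : nat) (X : seq bool -> nat) : rat :=
  (\sum_(t in arrangements n1 n2) (X t)%:R) / (#|arrangements n1 n2|)%:R.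

Definition Var_unif (n1 n2 : nat) (X : seq bool -> nat) : rat :=
  E_unif n1 n2 (fun s => X s ^ 2) - (E_unif n1 n2 X) ^+ 2.

(* If a word [d :: s] has K changes of symbol, then R_M = K/2 + 1 (integer
   division), so R_M and R_M^2 are of the form
   c0 + c1 K + c2 K^2 + (d0 + d1 K) [K odd].  This family is stable under
   K |-> K + 1, hence the sum of such a function of the number of changes of
   [c :: s], over the words [s] with given letter counts, obeys a Pascal-type
   recursion on the first letter of [s]; its closed form (a binomial coefficient
   times an explicit mean) follows by induction.  Conditioning on the first
   letter of the arrangement then gives E(R_M) and E(R_M^2). *)

From mathcomp Require Import all_boot all_order all_algebra.
From mathcomp Require Import ring lra zify.
Import Order.TTheory GRing.Theory Num.Theory.
Local Open Scope ring_scope.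

Fixpoint changes (c : bool) (s : seq bool) : nat :=
  if s is d :: s' then ((d != c) + changes d s')%N else 0%N.

Lemma runs_from_changes c s :
  runs_from c (Some c) s = (changes c s)./2 /\
  runs_from (~~ c) (Some c) s = uphalf (changes c s).
Proof.
elim: s c => [|d s IH] c //=.
have [IHt IHf] := IH true; have [IHt' IHf'] := IH false.
by case: c; case: d => /=; rewrite ?IHt ?IHf ?IHt' ?IHf' /= ?add0n ?add1n.
Qed.

Lemma RM_cons d s : RM (d :: s) = ((changes d s)./2).+1.
Proof.
have [run_d run_nd] := runs_from_changes d s.
rewrite /RM /runs /=; case: d run_d run_nd => /= -> ->; rewrite /= uphalf_half;
  case: (odd _) => /=; lia.
Qed.

Fixpoint words (n a : nat) : seq (seq bool) :=
  match n with
  | 0 => if a == 0%N then [:: [::]] else [::]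
  | n'.+1 => (if a is a'.+1 then map (cons true) (words n' a') else [::])
               ++ map (cons false) (words n' a)
  end.

Lemma nil_notin_map (T : eqType) (x : T) (ss : seq (seq T)) :
  ([::] \in map (cons x) ss) = false.
Proof. by apply/mapP => -[]. Qed.

Lemma mem_cons_map (T : eqType) (x d : T) s (ss : seq (seq T)) :
  (d :: s \in map (cons x) ss) = (d == x) && (s \in ss).
Proof.
by apply/mapP/andP => [[t Ht [-> ->]] | [/eqP -> Hs]]; [ | exists s].
Qed.

Lemma mem_words n a s : (s \in words n a) = (size s == n) && (count id s == a).
Proof.
elim: n a s => [|n IH] [|a] [|d s] //=; rewrite ?mem_cat ?nil_notin_map ?mem_cons_map ?IH //;
  by case: d => //=; rewrite ?add1n ?orbF ?andbF.
Qed.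

Lemma uniq_words n a : uniq (words n a).
Proof.
elim: n a => [|n IH] [|a] //=; rewrite ?cat_uniq !map_inj_uniq //; try by move=> x y [].
rewrite !IH /= andbT; apply/hasP => -[_ /mapP [s _ ->]].
by rewrite mem_cons_map.
Qed.

Lemma size_words n a : size (words n a) = 'C(n, a).
Proof.
by elim: n a => [|n IH] [|a] //=; rewrite ?size_cat !size_map !IH ?bin0 // binS addnC.
Qed.

Lemma words_small n a : (n < a)%N -> words n a = [::].
Proof. by elim: n a => [|n IH] [|a] //= lt_na; rewrite !IH // ltnW. Qed.

Lemma big_arrangements (R : Type) (idx : R) (op : Monoid.com_law idx)
    n1 n2 (F : seq bool -> R) :
  \big[op/idx]_(t in arrangements n1 n2) F t = \big[op/idx]_(s <- words (n1 + n2) n1) F s.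
Proof.
rewrite -big_enum /= -(big_map val xpredT F); apply: perm_big; apply: uniq_perm.
- by rewrite map_inj_uniq ?enum_uniq //; apply: val_inj.
- exact: uniq_words.
move=> s; rewrite mem_words; apply/mapP/andP => [[t] | [size_s count_s]].
  by rewrite mem_enum inE => count_t ->; rewrite size_tuple.
by exists (Tuple size_s); rewrite ?mem_enum ?inE.
Qed.

Lemma card_arrangements n1 n2 : #|arrangements n1 n2| = 'C(n1 + n2, n1).
Proof.
by rewrite -sum1_card (@big_arrangements _ _ _ _ _ (fun=> 1%N)) sum1_size size_words.
Qed.

Record qcoef := QCoef { c0 : rat; c1 : rat; c2 : rat; d0 : rat; d1 : rat }.

Definition qpoly (p : qcoef) (k : nat) : rat :=
  c0 p + c1 p * k%:R + c2 p * k%:R ^+ 2 + (d0 p + d1 p * k%:R) * (odd k)%:R.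

Definition qshift (b : bool) (p : qcoef) : qcoef :=
  let b : rat := b%:R in
  QCoef (c0 p + b * (c1 p + c2 p + d0 p + d1 p)) (c1 p + b * (2 * c2 p + d1 p)) (c2 p)
        ((1 - 2 * b) * d0 p - b * d1 p) ((1 - 2 * b) * d1 p).

Lemma qpoly_shift (b : bool) p k : qpoly p (b + k) = qpoly (qshift b p) k.
Proof. by rewrite /qpoly /= oddD natrD; case: b; case: (odd k) => /=; ring. Qed.

Definition change_sum (p : qcoef) (c : bool) (n a : nat) : rat :=
  \sum_(s <- words n a) qpoly p (changes c s).

Lemma change_sumS p c n a :
  change_sum p c n.+1 a =
    (if a is a'.+1 then change_sum (qshift (true != c) p) true n a' else 0)
    + change_sum (qshift (false != c) p) false n a.
Proof.
by case: a => [|a]; rewrite /change_sum /= ?add0r ?big_cat; [|congr (_ + _)];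
  rewrite big_map; apply: eq_bigr => s _; rewrite /= qpoly_shift.
Qed.

(* [qpoly_mean p A B] is the average of [qpoly p (changes c s)] over the words [s]
   with [A] letters [c] and [B] other letters: [c :: s] changes at its first step
   with probability [B / (A + B)], and at each of the [A + B - 1] inner steps
   with probability [2 A B / ((A + B) (A + B - 1))].  With [x / 0 = 0] the
   formula stays right when [A + B <= 1]. *)
Definition qpoly_mean (p : qcoef) (A B : rat) : rat :=
  let m := A + B in
  c0 p + (c1 p + c2 p) * (B + 2 * A * B) / m
  + c2 p * (2 * A * B * (2 * A * B + B - A - 1)) / (m * (m - 1))
  + (d0 p + d1 p) * B / m + d1 p * (2 * A * B * (B - 1)) / (m * (m - 1)).

Definition change_sum_formula (n : nat) : Prop :=
  forall a b c p, (a + b)%N = n ->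
  change_sum p c n a =
    'C(n, a)%:R * qpoly_mean p (if c then a else b)%:R (if c then b else a)%:R.

(* Computed directly: the recursion step divides by [(A + B) (A + B - 1)]. *)
Lemma change_sum_formula_small n : (n <= 2)%N -> change_sum_formula n.
Proof.
move=> n_le2 a b c p ab_n; move: n_le2; rewrite -ab_n.
case: a b {ab_n} => [|[|[|a]]] [|[|[|b]]] //= _;
  rewrite /change_sum /= ?big_cons ?big_nil /qpoly_mean /qpoly /=; case: c => /=.
all: by rewrite ?(addn0, add0n, bin0, bin1, binn, mul0r, mulr0, add0r, addr0, subr0, subrr); field.
Qed.

Lemma bin_succ_ratio (R : numFieldType) a b :
  'C(a + b.+1, a.+1)%:R = 'C(a + b.+1, a)%:R * b.+1%:R / a.+1%:R :> R.
Proof.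
have := mul_bin_left (a + b.+1) a; rewrite (_ : (a + b.+1 - a = b.+1)%N); last by lia.
move/(congr1 (fun m => m%:R : R)); rewrite !natrM => bin_rel.
by rewrite [_ * b.+1%:R]mulrC -bin_rel mulrC mulKf // pnatr_eq0.
Qed.

Ltac field_pos := field; rewrite ?andbT -?mulrDr ?mulf_eq0 ?negb_or;
  repeat (match goal with |- is_true (_ && _) => apply/andP; split end);
  apply: lt0r_neq0; lra.

Lemma change_sum_formulaS n : change_sum_formula n.+2 -> change_sum_formula n.+3.
Proof.
move=> IH a b c p ab_n; rewrite change_sumS.
have n_ge0 : 0 <= n%:R :> rat by apply: ler0n.
case: a b ab_n => [|a] [|b] ab_n //.
- have -> : b = n.+2 by lia.
  rewrite (IH _ _ _ _ (add0n _)) !bin0.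
  by case: c; rewrite /qpoly_mean /= -?natr1; field_pos.
- have -> : a = n.+2 by lia.
  rewrite (IH _ _ _ _ (addn0 _)) /change_sum words_small // big_nil addr0 !binn.
  by case: c; rewrite /qpoly_mean /= -?natr1; field_pos.
have ab1_n : (a + b.+1 = n.+2)%N by lia.
have a1b_n : (a.+1 + b = n.+2)%N by lia.
rewrite (IH _ _ _ _ ab1_n) (IH _ _ _ _ a1b_n) -ab1_n binS natrD bin_succ_ratio.
have a_ge0 : 0 <= a%:R :> rat by apply: ler0n.
have b_ge0 : 0 <= b%:R :> rat by apply: ler0n.
have ab_ge1 : 1 <= a%:R + b%:R :> rat by rewrite -natrD ler1n; lia.
by case: c; rewrite /qpoly_mean /= -?natr1; field_pos.
Qed.

Lemma change_sumE n : change_sum_formula n.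
Proof.
elim: n => [|[|[|n]] IH]; try exact: change_sum_formula_small.
exact: change_sum_formulaS.
Qed.

Lemma sum_arrangements_head (R : nmodType) a b (F : seq bool -> R) :
  \sum_(t in arrangements a.+1 b.+1) F t =
    \sum_(s <- words (a + b.+1) a) F (true :: s)
    + \sum_(s <- words (a + b.+1) a.+1) F (false :: s).
Proof. by rewrite big_arrangements addSn /= big_cat !big_map. Qed.

Lemma E_unif_qpoly_changes a b (X : seq bool -> nat) p :
  (forall d s, (X (d :: s))%:R = qpoly p (changes d s)) ->
  E_unif a.+1 b.+1 X =
    (a.+1%:R * qpoly_mean p a%:R b.+1%:R + b.+1%:R * qpoly_mean p b%:R a.+1%:R)
    / (a + b).+2%:R.
Proof.
move=> X_changes.
have true_head := @change_sumE _ a b.+1 true p (erefl _).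
have false_head := @change_sumE _ a.+1 b false p (addSnnS a b).
rewrite /E_unif (@sum_arrangements_head _ _ _ (fun s => (X s)%:R : rat)) card_arrangements.
rewrite (eq_bigr _ (fun s _ => X_changes true s)) (eq_bigr _ (fun s _ => X_changes false s)).
rewrite -/(change_sum p true _ a) -/(change_sum p false _ a.+1) true_head false_head.
rewrite addSn binS natrD bin_succ_ratio -!natr1 (addnC a) natrD.
have C_gt0 : 0 < 'C(b.+1 + a, a)%:R :> rat by rewrite ltr0n bin_gt0 leq_addl.
have a_ge0 : 0 <= a%:R :> rat by apply: ler0n.
have b_ge0 : 0 <= b%:R :> rat by apply: ler0n.
by field_pos.
Qed.

Lemma natr_half (R : numFieldType) k : (k./2)%:R = (k%:R - (odd k)%:R) / 2 :> R.
Proof.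
rewrite -[in X in X - _](odd_double_half k) natrD -muln2 natrM.
by rewrite addrC addKr mulfK ?pnatr_eq0.
Qed.

Lemma RM_qpoly d s :
  (RM (d :: s))%:R = qpoly (QCoef 1 (1/2) 0 (-(1/2)) 0) (changes d s).
Proof. by rewrite RM_cons -natr1 natr_half /qpoly /=; case: (odd _) => /=; field. Qed.

Lemma RM_sqr_qpoly d s :
  ((RM (d :: s)) ^ 2)%:R = qpoly (QCoef 1 1 (1/4) (-(3/4)) (-(1/2))) (changes d s).
Proof.
by rewrite natrX RM_cons -natr1 natr_half /qpoly /=; case: (odd _) => /=; field.
Qed.

Theorem theorem1 (n1 n2 : nat) (h1 : (1 <= n1)%N) (h2 : (1 <= n2)%N) :
  let n : rat := (n1 + n2)%:R in
  let a : rat := n1%:R in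
  let b : rat := n2%:R in
  E_unif n1 n2 RM = 2 + (n * (a - 1) * (b - 1) - 2 * a * b) / (n * (n - 1))
  /\
  Var_unif n1 n2 RM =
    a * b * (a ^+ 3 + b ^+ 3 + a ^+ 3 * b + a * b ^+ 3 - a ^+ 2 - b ^+ 2
             + 2 * a ^+ 2 * b ^+ 2 - 5 * a ^+ 2 * b - 5 * a * b ^+ 2
             + 6 * a * b)
    / (n ^+ 2 * (n - 1) ^+ 2 * (n - 2)).
Proof.
case: n1 h1 => [|a] // _; case: n2 h2 => [|b] // _ /=.
rewrite /Var_unif (@E_unif_qpoly_changes _ _ RM _ RM_qpoly).
rewrite (@E_unif_qpoly_changes _ _ (fun s => RM s ^ 2)%N _ RM_sqr_qpoly).
have [/eqP|ab_gt0] := posnP (a + b).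
  (* n = 2: both variances are 0, the right-hand one as a division by 0. *)
  by rewrite addn_eq0 => /andP[/eqP-> /eqP->]; split; apply/eqP; vm_compute.
have a_ge0 : 0 <= a%:R :> rat by apply: ler0n.
have b_ge0 : 0 <= b%:R :> rat by apply: ler0n.
have ab_ge1 : 1 <= a%:R + b%:R :> rat by rewrite -natrD ler1n.
rewrite /qpoly_mean /= -!natr1 !natrD -!natr1.
by split; field_pos.
Qed.
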